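(* Let $\delta>0$. For UCBVI-CH run for $K$ episodes, with probability at least $1-\delta$, simultaneously for all $k\in[K]$, $h\in[H+1]$ and $x\in\mathcal S$, one has $V_{k,h}(x)\ge V^*_h(x)$.
   Context: Setting: a finite-horizon episodic MDP with finite state set $\mathcal S$ ($|\mathcal S|=S$), finite action set $\mathcal A$ ($|\mathcal A|=A$), unknown transitions $P(\cdot\mid x,a)$, known deterministic reward $R:\mathcal S\times\mathcal A\to[0,1]$, horizon $H$; episodes $k=1,\dots,K$ start from arbitrary $x_{k,1}$ and $x_{k,h+1}\sim P(\cdot\mid x_{k,h},a_{k,h})$. $V^*_h(x)=\sup_\pi\mathbb E\big[\sum_{j=h}^HR(x_j,\pi(x_j,j))\mid x_h=x\big]$, $V^*_{H+1}\equiv0$; $T=KH$. UCBVI: before episode $k$, from transitions of episodes $i<k$, $N_k(x,a,y)$ counts transitions $(x,a)\to y$, $N_k(x,a)=\sum_yN_k(x,a,y)$, $\widehat P_k(y\mid x,a)=N_k(x,a,y)/N_k(x,a)$ if $N_k(x,a)>0$. $V_{k,H+1}\equiv0$, $Q_{0,h}\equiv H$; for $h=H,\dots,1$: if $N_k(x,a)>0$, $Q_{k,h}(x,a)=\min\big(Q_{k-1,h}(x,a),H,R(x,a)+\sum_y\widehat P_k(y\mid x,a)V_{k,h+1}(y)+b_{k,h}(x,a)\big)$, else $Q_{k,h}(x,a)=H$; $V_{k,h}(x)=\max_aQ_{k,h}(x,a)$; actions are chosen greedily w.r.t. $Q_{k,h}$. UCBVI-CH uses $b_{k,h}(x,a)=7HL'/\sqrt{N_k(x,a)}$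 with $L'=\ln(5SAT/\delta)$. *)

From Stdlib Require Import Reals List Arith ClassicalEpsilon.
Import ListNotations.
Open Scope R_scope.

(* States are 0..nS-1, actions 0..nA-1, steps h are 1..nH (1-indexed),
   episodes k are 1..nK (1-indexed). *)

Definition sumR (n : nat) (f : nat -> R) : R :=
  fold_right (fun i acc => f i + acc) 0 (seq 0 n).

(* maximum of f over 0..n-1 (used with n >= 1) *)
Definition maxR (n : nat) (f : nat -> R) : R :=
  fold_right (fun i acc => Rmax (f i) acc) (f 0%nat) (seq 0 n).

(* a transition (x, a, y) *)
Definition trans := (nat * nat * nat)%type.
Definition episode := list trans.

Definition ind (P : Prop) : R :=
  if excluded_middle_informative P then 1 else 0.

Section UCBVI.
Variables (nS nA nH nK : nat) (Rw : nat -> nat -> R) (delta : R).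

Definition cnt3 (hist : list trans) (x a y : nat) : nat :=
  length (filter (fun t => match t with (x', a', y') =>
            Nat.eqb x' x && Nat.eqb a' a && Nat.eqb y' y end)%bool hist).

Definition Nxa (hist : list trans) (x a : nat) : nat :=
  fold_right (fun y acc => (cnt3 hist x a y + acc)%nat) 0%nat (seq 0 nS).

Definition Phat (hist : list trans) (x a y : nat) : R :=
  INR (cnt3 hist x a y) / INR (Nxa hist x a).

Definition Ttot : R := INR (nK * nH).
Definition Lp : R := ln (5 * INR nS * INR nA * Ttot / delta).

Definition bonus (hist : list trans) (x a : nat) : R :=
  7 * INR nH * Lp / sqrt (INR (Nxa hist x a)).

(* Q_{k,h}(x,a) given the data hist of episodes < k, Q_{k-1,.} = Qprev and
   V_{k,h+1} = Vnext *)
Definition Qcore (hist : list trans) (Qprev : nat -> nat -> nat -> R)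
    (h : nat) (Vnext : nat -> R) (x a : nat) : R :=
  if Nat.ltb 0 (Nxa hist x a) then
    Rmin (Qprev h x a)
      (Rmin (INR nH)
         (Rw x a + sumR nS (fun y => Phat hist x a y * Vnext y) + bonus hist x a))
  else INR nH.

(* Vback m = V_{k, H+1-m} *)
Fixpoint Vback (hist : list trans) (Qprev : nat -> nat -> nat -> R) (m : nat)
    : nat -> R :=
  match m with
  | O => fun _ => 0
  | S m' => fun x =>
      maxR nA (fun a => Qcore hist Qprev (nH - m') (Vback hist Qprev m') x a)
  end.

Definition Qlev hist Qprev (h x a : nat) : R :=
  Qcore hist Qprev h (Vback hist Qprev (nH - h)) x a.
Definition Vlev hist Qprev (h x : nat) : R :=
  Vback hist Qprev (nH + 1 - h) x.

(* Q_{k,h}(x,a), computed from the first k-1 episodes of eps; Q_{0,h} = H *)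
Fixpoint Qk (eps : list episode) (k : nat) : nat -> nat -> nat -> R :=
  match k with
  | O => fun _ _ _ => INR nH
  | S k' => Qlev (concat (firstn k' eps)) (Qk eps k')
  end.

(* V_{k,h}(x), for k >= 1 *)
Definition Vk (eps : list episode) (k h x : nat) : R :=
  match k with
  | O => 0
  | S k' => Vlev (concat (firstn k' eps)) (Qk eps k') h x
  end.

(* the action selection rule is greedy w.r.t. Q_{k,h} (arbitrary tie-breaking);
   pick k h x eps, where eps are the data of the previous episodes *)
Definition greedy (pick : nat -> nat -> nat -> list episode -> nat) : Prop :=
  forall k h x eps, (1 <= k)%nat -> (1 <= h <= nH)%nat -> (x < nS)%nat ->
    (pick k h x eps < nA)%nat /\ Qk eps k h x (pick k h x eps) = Vk eps k h x.

End UCBVI.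

Section MDP.
Variables (nS nA nH : nat) (P : nat -> nat -> nat -> R) (Rw : nat -> nat -> R).

(* value of a deterministic Markov policy pi(x, j):  Vpi_back m = V^pi_{H+1-m} *)
Fixpoint Vpi_back (pi : nat -> nat -> nat) (m : nat) : nat -> R :=
  match m with
  | O => fun _ => 0
  | S m' => fun x =>
      let a := pi x (nH - m')%nat in
      Rw x a + sumR nS (fun y => P x a y * Vpi_back pi m' y)
  end.

(* V^pi_h(x) = E[ sum_{j=h}^H R(x_j, pi(x_j, j)) | x_h = x ] *)
Definition Vpi (pi : nat -> nat -> nat) (h x : nat) : R :=
  Vpi_back pi (nH + 1 - h) x.

Definition valid_policy (pi : nat -> nat -> nat) : Prop :=
  forall x j, (x < nS)%nat -> (pi x j < nA)%nat.

(* V*_h(x) >= ... : value dominates the sup over policies *)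
Definition dominates_opt (V : R) (h x : nat) : Prop :=
  forall pi, valid_policy pi -> V >= Vpi pi h x.
End MDP.

Fixpoint all_seqs (n m : nat) : list (list nat) :=
  match n with
  | O => [ [] ]
  | S n' => flat_map (fun y => map (cons y) (all_seqs n' m)) (seq 0 m)
  end.

(* all outcomes for k episodes: the next states y_{k,1..H} of each episode *)
Fixpoint all_outcomes (k nH nS : nat) : list (list (list nat)) :=
  match k with
  | O => [ [] ]
  | S k' => flat_map (fun ys => map (cons ys) (all_outcomes k' nH nS))
                     (all_seqs nH nS)
  end.

Section Run.
Variables (P : nat -> nat -> nat -> R)
          (start : nat -> list episode -> nat)
          (pick : nat -> nat -> nat -> list episode -> nat).

(* run episode k from step h at state x; ys = next states drawn;
   returns the transitions and the probability factor *)
Fixpoint run_ep (k h x : nat) (eps : list episode) (ys : list nat)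
    : episode * R :=
  match ys with
  | [] => ([], 1)
  | y :: ys' =>
      let a := pick k h x eps in
      let '(tr, p) := run_ep k (S h) y eps ys' in
      ((x, a, y) :: tr, P x a y * p)
  end.

(* run episodes k, k+1, ... ; start state chosen (possibly adaptively) by start *)
Fixpoint run (k : nat) (eps : list episode) (om : list (list nat))
    : list episode * R :=
  match om with
  | [] => (eps, 1)
  | ys :: om' =>
      let '(tr, p) := run_ep k 1 (start k eps) eps ys in
      let '(e, q) := run (S k) (eps ++ [tr]) om' in
      (e, p * q)
  end.
End Run.

Definition optimism (nS nA nH nK : nat) (P : nat -> nat -> nat -> R)
    (Rw : nat -> nat -> R) (delta : R) (eps : list episode) : Prop :=
  forall k h x, (1 <= k <= nK)%nat -> (1 <= h <= nH + 1)%nat -> (x < nS)%nat ->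
    dominates_opt nS nA nH P Rw (Vk nS nA nH nK Rw delta eps k h x) h x.

Definition prob_optimism (nS nA nH nK : nat) (P : nat -> nat -> nat -> R)
    (Rw : nat -> nat -> R) (delta : R)
    (start : nat -> list episode -> nat)
    (pick : nat -> nat -> nat -> list episode -> nat) : R :=
  fold_right (fun om acc =>
      let '(eps, p) := run P start pick 1 [] om in
      p * ind (optimism nS nA nH nK P Rw delta eps) + acc)
    0 (all_outcomes nK nH nS).

(* By backward induction, V_(k,h) >= V*_h as soon as, for every prefix of the data, every
   pair (x,a) and every horizon m, the true continuation value P V*_m (x,a) is at most its
   empirical estimate plus the bonus.  Indexing by visit number rather than by time, the
   failure of this inequality for fixed (x, a, m) and visit count n is the event that the
   centred values P V*_m (x,a) - V*_m (y_i) at the first n visits of (x,a) sum to more than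
   n b_n.  By Hoeffding's lemma, exp (lam * partial sum - 2 lam^2 H^2 * visits) is a
   supermartingale along the run, so this event has probability at most exp (-2 L').  A union
   bound over the S A H T indices (x, a, m, n) leaves a failure probability of at most
   S A H T (delta / (5 S A T))^2 <= delta. *)

From Stdlib Require Import Reals List Lia Lra Psatz Classical ClassicalEpsilon.
Import ListNotations.
Open Scope R_scope.

(** * Sums, maxima and indicators *)

Definition lsum {A} (l : list A) (f : A -> R) : R :=
  fold_right (fun a acc => f a + acc) 0 l.
Arguments lsum {A} l f : simpl never.

Lemma sumR_lsum n f : sumR n f = lsum (seq 0 n) f.
Proof. reflexivity. Qed.

Lemma lsum_nil {A} (f : A -> R) : lsum [] f = 0.
Proof. reflexivity. Qed.

Lemma lsum_cons {A} a (l : list A) f : lsum (a :: l) f = f a + lsum l f.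
Proof. reflexivity. Qed.

Lemma lsum_app {A} (l1 l2 : list A) f : lsum (l1 ++ l2) f = lsum l1 f + lsum l2 f.
Proof.
  induction l1 as [|a l1 IH]; simpl app; rewrite ?lsum_cons, ?lsum_nil; [lra|].
  rewrite IH; lra.
Qed.

Lemma lsum_ext {A} (l : list A) f g :
  (forall a, In a l -> f a = g a) -> lsum l f = lsum l g.
Proof.
  induction l as [|b l IH]; intros H; auto.
  rewrite !lsum_cons, H, IH; [reflexivity | intros; apply H; right | left]; auto.
Qed.

Lemma lsum_le {A} (l : list A) f g :
  (forall a, In a l -> f a <= g a) -> lsum l f <= lsum l g.
Proof.
  induction l as [|b l IH]; intros H; rewrite ?lsum_nil, ?lsum_cons; [lra|].
  apply Rplus_le_compat; [apply H; left | apply IH; intros; apply H; right]; auto.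
Qed.

Lemma lsum_plus {A} (l : list A) f g :
  lsum l (fun a => f a + g a) = lsum l f + lsum l g.
Proof. induction l; rewrite ?lsum_cons, ?lsum_nil; [lra|]. rewrite IHl. lra. Qed.

Lemma lsum_scal {A} (l : list A) c f : lsum l (fun a => c * f a) = c * lsum l f.
Proof. induction l; rewrite ?lsum_cons, ?lsum_nil; [lra|]. rewrite IHl. lra. Qed.

Lemma lsum_minus {A} (l : list A) f g :
  lsum l (fun a => f a - g a) = lsum l f - lsum l g.
Proof. induction l; rewrite ?lsum_cons, ?lsum_nil; [lra|]. rewrite IHl. lra. Qed.

Lemma lsum_const {A} (l : list A) c : lsum l (fun _ => c) = c * INR (length l).
Proof.
  induction l; simpl length; rewrite ?lsum_cons, ?lsum_nil, ?S_INR; simpl INR; lra.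
Qed.

Lemma lsum_nonneg {A} (l : list A) f :
  (forall a, In a l -> 0 <= f a) -> 0 <= lsum l f.
Proof.
  intros H. rewrite <- (Rmult_0_l (INR (length l))), <- lsum_const. now apply lsum_le.
Qed.

Lemma lsum_ge_term {A} (l : list A) f b :
  (forall a, In a l -> 0 <= f a) -> In b l -> f b <= lsum l f.
Proof.
  induction l as [|a l IH]; intros H Hb; [destruct Hb|].
  rewrite lsum_cons. destruct Hb as [<-|Hb].
  - assert (0 <= lsum l f) by (apply lsum_nonneg; intros; apply H; right; auto). lra.
  - assert (0 <= f a) by (apply H; left; auto).
    assert (f b <= lsum l f) by (apply IH; auto; intros; apply H; right; auto). lra.
Qed.

Lemma lsum_map {A B} (l : list A) (g : A -> B) f :
  lsum (map g l) f = lsum l (fun a => f (g a)).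
Proof. induction l; simpl map; auto. rewrite !lsum_cons, IHl. reflexivity. Qed.

Lemma lsum_flat_map {A B} (l : list A) (g : A -> list B) f :
  lsum (flat_map g l) f = lsum l (fun a => lsum (g a) f).
Proof. induction l; simpl flat_map; auto. rewrite lsum_app, IHl. reflexivity. Qed.

Lemma lsum_comm {A B} (l1 : list A) (l2 : list B) f :
  lsum l1 (fun a => lsum l2 (f a)) = lsum l2 (fun b => lsum l1 (fun a => f a b)).
Proof.
  induction l1 as [|a l1 IH].
  - rewrite lsum_nil, (lsum_ext _ _ (fun _ => 0)), lsum_const by (intros; apply lsum_nil).
    lra.
  - rewrite lsum_cons, IH, <- lsum_plus. reflexivity.
Qed.

Lemma length_concat_uniform {A} (l : list (list A)) c :
  (forall a, In a l -> length a = c) -> length (concat l) = (length l * c)%nat.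
Proof.
  induction l as [|a l IH]; intros H; simpl; auto.
  rewrite length_app, H, IH; auto; [intros; apply H; right; auto | left; auto].
Qed.

Lemma in_all_seqs L m ys :
  In ys (all_seqs L m) -> length ys = L /\ forall y, In y ys -> (y < m)%nat.
Proof.
  revert ys; induction L as [|L IH]; intros ys H; simpl in H.
  - destruct H as [<-|[]]. split; [reflexivity | intros _ []].
  - apply in_flat_map in H. destruct H as [y [Hy H]].
    apply in_map_iff in H. destruct H as [ys' [<- H]]. apply IH in H as [Hlen Hys'].
    apply in_seq in Hy. simpl. split; [auto | intros z [<-|Hz]; auto; lia].
Qed.

Lemma sumR_S n f : sumR (S n) f = sumR n f + f n.
Proof. rewrite !sumR_lsum, seq_S, lsum_app, lsum_cons, lsum_nil, Nat.add_0_l. lra. Qed.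

Lemma sumR_delta n y0 g : (y0 < n)%nat ->
  sumR n (fun y => if Nat.eqb y0 y then g y else 0) = g y0.
Proof.
  induction n as [|n IH]; intros H; [lia|].
  rewrite sumR_S. destruct (Nat.eqb_spec y0 n) as [->|Hne].
  - rewrite sumR_lsum, (lsum_ext _ _ (fun _ => 0)), lsum_const; [lra|].
    intros a Ha. apply in_seq in Ha. destruct (Nat.eqb_spec n a); [lia|auto].
  - rewrite IH by lia. lra.
Qed.

Lemma maxR_ge n f a : (a < n)%nat -> f a <= maxR n f.
Proof.
  intros Ha. unfold maxR. assert (Hin : In a (seq 0 n)) by (apply in_seq; lia).
  induction (seq 0 n) as [|b l IH]; simpl; [destruct Hin|].
  destruct Hin as [<-|Hin]; [apply Rmax_l|].
  eapply Rle_trans; [apply IH, Hin | apply Rmax_r].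
Qed.

Lemma maxR_le n f c : (0 < n)%nat -> (forall a, (a < n)%nat -> f a <= c) -> maxR n f <= c.
Proof.
  intros Hn H. unfold maxR.
  assert (Hl : forall a, In a (seq 0 n) -> f a <= c)
    by (intros a Ha; apply in_seq in Ha; apply H; lia).
  induction (seq 0 n) as [|b l IH]; simpl; [apply H, Hn|].
  apply Rmax_lub; [apply Hl; left | apply IH; intros; apply Hl; right]; auto.
Qed.

Lemma maxR_mono n f g : (0 < n)%nat ->
  (forall a, (a < n)%nat -> f a <= g a) -> maxR n f <= maxR n g.
Proof.
  intros Hn H. apply maxR_le; auto. intros a Ha.
  eapply Rle_trans; [apply H, Ha | apply maxR_ge, Ha].
Qed.

Lemma exp_le_exp_compat x y : x <= y -> exp x <= exp y.
Proof. intros [H|H]; [left; apply exp_increasing, H | rewrite H; lra]. Qed.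

Lemma exp_le_quadratic z : z <= 1/2 -> exp z <= 1 + z + 2 * z ^ 2.
Proof.
  intros Hz.
  assert (Hinv : exp z * exp (- z) = 1) by (rewrite <- exp_plus, Rplus_opp_r; apply exp_0).
  assert (Hlow := exp_ineq1_le (- z)).
  assert (exp z * (1 - z) <= 1)
    by (rewrite <- Hinv; apply Rmult_le_compat_l; [left; apply exp_pos | lra]).
  assert (1 <= (1 + z + 2 * z ^ 2) * (1 - z)).
  { assert (0 <= z ^ 2 * (1 - 2 * z)) by (apply Rmult_le_pos; [apply pow2_ge_0 | lra]). nra. }
  apply (Rmult_le_reg_r (1 - z)); lra.
Qed.

Lemma hoeffding_mgf n (p X : nat -> R) c lam :
  (forall y, (y < n)%nat -> 0 <= p y) -> sumR n p = 1 ->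
  sumR n (fun y => p y * X y) = 0 ->
  (forall y, (y < n)%nat -> - c <= X y <= c) -> 0 <= lam -> lam * c <= 1/2 ->
  sumR n (fun y => p y * exp (lam * X y - 2 * lam ^ 2 * c ^ 2)) <= 1.
Proof.
  intros Hp Hsum Hmean HX Hl Hlc.
  set (B := 2 * lam ^ 2 * c ^ 2).
  assert (HE : 0 < exp (- B)) by apply exp_pos.
  apply Rle_trans with (sumR n (fun y => exp (- B) * (p y + lam * (p y * X y) + B * p y))).
  - rewrite !sumR_lsum. apply lsum_le. intros y Hy. apply in_seq in Hy.
    specialize (Hp y ltac:(lia)). specialize (HX y ltac:(lia)).
    unfold Rminus. rewrite exp_plus.
    assert (exp (lam * X y) <= 1 + lam * X y + B).
    { eapply Rle_trans; [apply exp_le_quadratic; nra|].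
      assert (X y ^ 2 <= c ^ 2) by nra.
      assert (lam ^ 2 * X y ^ 2 <= lam ^ 2 * c ^ 2) by (apply Rmult_le_compat_l; nra).
      unfold B. nra. }
    assert (p y * exp (lam * X y) <= p y * (1 + lam * X y + B)) by (apply Rmult_le_compat_l; lra).
    nra.
  - rewrite !sumR_lsum, lsum_scal, !lsum_plus, !lsum_scal, <- !sumR_lsum, Hsum, Hmean.
    assert (Hb := exp_ineq1_le B). rewrite exp_Ropp.
    apply (Rmult_le_reg_l (exp B)); [apply exp_pos|].
    rewrite <- Rmult_assoc, Rinv_r by (apply Rgt_not_eq, exp_pos). lra.
Qed.

Lemma ind_true (Q : Prop) : Q -> ind Q = 1.
Proof. unfold ind. destruct (excluded_middle_informative Q); tauto. Qed.

Lemma ind_false (Q : Prop) : ~ Q -> ind Q = 0.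
Proof. unfold ind. destruct (excluded_middle_informative Q); tauto. Qed.

Lemma ind_bounds (Q : Prop) : 0 <= ind Q <= 1.
Proof. unfold ind. destruct (excluded_middle_informative Q); lra. Qed.

Lemma ind_le (Q Q' : Prop) : (Q -> Q') -> ind Q <= ind Q'.
Proof.
  intros H. destruct (classic Q) as [q|q].
  - rewrite !ind_true; auto. lra.
  - rewrite ind_false by auto. apply ind_bounds.
Qed.

(** * Visits of a state-action pair *)

Definition is_visit (x a : nat) (t : trans) : bool :=
  match t with (x', a', _) => Nat.eqb x' x && Nat.eqb a' a end.

Definition nvisits (x a : nat) (l : list trans) : nat := length (filter (is_visit x a) l).

Fixpoint first_visits_sum (x a : nat) (g : nat -> R) (l : list trans) (n : nat) : R :=
  match l with
  | [] => 0
  | t :: l' =>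
      if is_visit x a t then
        match n with O => 0 | S n' => g (snd t) + first_visits_sum x a g l' n' end
      else first_visits_sum x a g l' n
  end.

Lemma nvisits_cons x a t l :
  nvisits x a (t :: l) = (if is_visit x a t then S (nvisits x a l) else nvisits x a l).
Proof. unfold nvisits; simpl. destruct (is_visit x a t); reflexivity. Qed.

Lemma nvisits_le_length x a l : (nvisits x a l <= length l)%nat.
Proof. apply filter_length_le. Qed.

Lemma first_visits_sum_0 x a g l : first_visits_sum x a g l 0 = 0.
Proof. induction l as [|t l IH]; simpl; auto. destruct (is_visit x a t); auto. Qed.

Lemma first_visits_sum_cons x a g x' a' y l n :
  first_visits_sum x a g ((x', a', y) :: l) n =
  if (Nat.eqb x' x && Nat.eqb a' a)%bool then
    match n with O => 0 | S n' => g y + first_visits_sum x a g l n' end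
  else first_visits_sum x a g l n.
Proof. reflexivity. Qed.

Lemma first_visits_sum_app x a g l1 l2 n :
  first_visits_sum x a g (l1 ++ l2) n =
  first_visits_sum x a g l1 n + first_visits_sum x a g l2 (n - nvisits x a l1).
Proof.
  revert n; induction l1 as [|t l1 IH]; intros n; simpl app.
  - rewrite Nat.sub_0_r. simpl. lra.
  - rewrite nvisits_cons. simpl. destruct (is_visit x a t); [destruct n|]; simpl.
    + rewrite first_visits_sum_0. lra.
    + rewrite IH. lra.
    + apply IH.
Qed.

Lemma first_visits_sum_affine_ge x a g al be l n : 0 <= be ->
  al * first_visits_sum x a g l n - be * INR n
  <= first_visits_sum x a (fun y => al * g y - be) l n.
Proof.
  intros Hbe. revert n; induction l as [|t l IH]; intros n; simpl.
  - assert (0 <= INR n) by apply pos_INR. nra.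
  - destruct (is_visit x a t); [destruct n as [|n]|]; [simpl; lra | | apply IH].
    specialize (IH n). rewrite S_INR. nra.
Qed.

Lemma first_visits_sum_one x a l :
  first_visits_sum x a (fun _ => 1) l (nvisits x a l) = INR (nvisits x a l).
Proof.
  induction l as [|t l IH]; [reflexivity|].
  rewrite nvisits_cons. simpl. destruct (is_visit x a t); [rewrite S_INR|]; lra.
Qed.

Lemma cnt3_cons t l x a y : cnt3 (t :: l) x a y =
  ((if (is_visit x a t && Nat.eqb (snd t) y)%bool then 1 else 0) + cnt3 l x a y)%nat.
Proof.
  destruct t as [[x' a'] y']. unfold cnt3. simpl.
  destruct (x' =? x), (a' =? a), (y' =? y); reflexivity.
Qed.

Lemma sum_counts_first_visits_sum nS l x a g n :
  (forall t, In t l -> (snd t < nS)%nat) -> (nvisits x a l <= n)%nat ->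
  sumR nS (fun y => INR (cnt3 l x a y) * g y) = first_visits_sum x a g l n.
Proof.
  revert n; induction l as [|t l IH]; intros n Hl Hn.
  - rewrite sumR_lsum, (lsum_ext _ _ (fun _ => 0)), lsum_const; [simpl; lra|].
    intros; unfold cnt3; simpl; lra.
  - assert (Ht : (snd t < nS)%nat) by (apply Hl; left; auto).
    rewrite sumR_lsum, (lsum_ext _ _ (fun y =>
      (if (is_visit x a t && Nat.eqb (snd t) y)%bool then g y else 0)
      + INR (cnt3 l x a y) * g y)).
    2:{ intros y _. rewrite cnt3_cons, plus_INR.
        destruct (is_visit x a t && (snd t =? y))%bool; simpl INR; lra. }
    rewrite lsum_plus, <- !sumR_lsum. rewrite nvisits_cons in Hn. simpl.
    destruct (is_visit x a t); simpl.
    + destruct n as [|n]; [lia|]. rewrite sumR_delta by exact Ht.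
      rewrite (IH n); [reflexivity | intros; apply Hl; right; auto | lia].
    + rewrite sumR_lsum, lsum_const.
      rewrite (IH n); [lra | intros; apply Hl; right; auto | lia].
Qed.

Lemma INR_Nxa nS l x a : INR (Nxa nS l x a) = sumR nS (fun y => INR (cnt3 l x a y)).
Proof.
  unfold Nxa. rewrite sumR_lsum. induction (seq 0 nS) as [|y ys IH]; [reflexivity|].
  simpl fold_right. rewrite plus_INR, IH, lsum_cons. reflexivity.
Qed.

Lemma Nxa_nvisits nS l x a :
  (forall t, In t l -> (snd t < nS)%nat) -> Nxa nS l x a = nvisits x a l.
Proof.
  intros Hl. apply INR_eq. rewrite INR_Nxa, <- first_visits_sum_one.
  rewrite <- (sum_counts_first_visits_sum nS) by auto. apply lsum_ext. intros; lra.
Qed.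

(** * Optimal values and optimism under concentration *)

Section UCBVI_CH.
Variables (nS nA nH nK : nat) (P : nat -> nat -> nat -> R) (Rw : nat -> nat -> R) (delta : R)
  (start : nat -> list episode -> nat) (pick : nat -> nat -> nat -> list episode -> nat).
Hypothesis HS : (0 < nS)%nat.
Hypothesis HA : (0 < nA)%nat.
Hypothesis HH : (0 < nH)%nat.
Hypothesis HP0 : forall x a y, (x < nS)%nat -> (a < nA)%nat -> (y < nS)%nat -> 0 <= P x a y.
Hypothesis HP1 : forall x a, (x < nS)%nat -> (a < nA)%nat -> sumR nS (fun y => P x a y) = 1.
Hypothesis HR : forall x a, (x < nS)%nat -> (a < nA)%nat -> 0 <= Rw x a <= 1.
Hypothesis Hstart : forall k eps, (start k eps < nS)%nat.
Hypothesis Hpick : forall k h x eps, (1 <= k)%nat -> (1 <= h <= nH)%nat -> (x < nS)%nat ->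
  (pick k h x eps < nA)%nat.
Hypothesis Hdelta : 0 < delta < 1.

(* [Vopt m] is [V*_(H+1-m)], the optimal value with [m] steps to go. *)
Fixpoint Vopt (m : nat) : nat -> R :=
  match m with
  | O => fun _ => 0
  | S m' => fun x => maxR nA (fun a => Rw x a + sumR nS (fun y => P x a y * Vopt m' y))
  end.

Definition PVopt (x a m : nat) : R := sumR nS (fun y => P x a y * Vopt m y).

Lemma expect_mono x a (v w : nat -> R) : (x < nS)%nat -> (a < nA)%nat ->
  (forall y, (y < nS)%nat -> v y <= w y) ->
  sumR nS (fun y => P x a y * v y) <= sumR nS (fun y => P x a y * w y).
Proof.
  intros Hx Ha H. rewrite !sumR_lsum. apply lsum_le. intros y Hy. apply in_seq in Hy.
  apply Rmult_le_compat_l; [apply HP0 | apply H]; auto; lia.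
Qed.

Lemma expect_const x a c : (x < nS)%nat -> (a < nA)%nat ->
  sumR nS (fun y => P x a y * c) = c.
Proof.
  intros Hx Ha.
  rewrite sumR_lsum, (lsum_ext _ _ (fun y => c * P x a y)), lsum_scal, <- sumR_lsum, HP1;
    auto; [lra | intros; lra].
Qed.

Lemma expect_bounds x a (v : nat -> R) lo hi : (x < nS)%nat -> (a < nA)%nat ->
  (forall y, (y < nS)%nat -> lo <= v y <= hi) ->
  lo <= sumR nS (fun y => P x a y * v y) <= hi.
Proof.
  intros Hx Ha Hv. rewrite <- (expect_const x a lo), <- (expect_const x a hi) by auto.
  split; apply expect_mono; auto; apply Hv.
Qed.

Lemma Vopt_bounds m x : (x < nS)%nat -> 0 <= Vopt m x <= INR m.
Proof.
  revert x; induction m as [|m IH]; intros x Hx; simpl Vopt; [simpl; lra|].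
  assert (HPV : forall a, (a < nA)%nat -> 0 <= sumR nS (fun y => P x a y * Vopt m y) <= INR m)
    by (intros; apply expect_bounds; auto).
  split.
  - eapply Rle_trans; [|apply (maxR_ge _ _ 0%nat HA)].
    destruct (HR x 0 Hx HA), (HPV 0%nat HA). lra.
  - apply maxR_le; auto. intros a Ha. destruct (HR x a Hx Ha), (HPV a Ha). rewrite S_INR. lra.
Qed.

Lemma PVopt_bounds x a m : (x < nS)%nat -> (a < nA)%nat -> 0 <= PVopt x a m <= INR m.
Proof.
  intros Hx Ha. apply expect_bounds; auto. intros; apply Vopt_bounds; auto.
Qed.

Lemma Vpi_le_Vopt pi m x : valid_policy nS nA pi -> (x < nS)%nat ->
  Vpi_back nS nH P Rw pi m x <= Vopt m x.
Proof.
  intros Hpi. revert x; induction m as [|m IH]; intros x Hx; simpl; [lra|].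
  assert (Ha : (pi x (nH - m)%nat < nA)%nat) by (apply Hpi, Hx).
  eapply Rle_trans; [|apply (maxR_ge _ _ _ Ha)].
  apply Rplus_le_compat_l, expect_mono; auto.
Qed.

Definition Qopt (h x a : nat) : R := Rw x a + PVopt x a (nH - h).

Definition bonus_at (n : nat) : R := 7 * INR nH * Lp nS nA nH nK delta / sqrt (INR n).

Definition concentrated (hist : list trans) : Prop :=
  forall x a m, (x < nS)%nat -> (a < nA)%nat -> (m < nH)%nat -> (0 < Nxa nS hist x a)%nat ->
  PVopt x a m <= sumR nS (fun y => Phat nS hist x a y * Vopt m y)
                 + bonus nS nA nH nK delta hist x a.

Lemma Qopt_le_H h x a : (1 <= h <= nH)%nat -> (x < nS)%nat -> (a < nA)%nat ->
  Qopt h x a <= INR nH.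
Proof.
  intros Hh Hx Ha. unfold Qopt. destruct (HR x a Hx Ha), (PVopt_bounds x a (nH - h) Hx Ha).
  rewrite minus_INR in * by lia. assert (1 <= INR h) by (apply (le_INR 1); lia). lra.
Qed.

Lemma Phat_nonneg hist x a y : 0 <= Phat nS hist x a y.
Proof.
  unfold Phat. destruct (Nat.eq_dec (Nxa nS hist x a) 0) as [->|Hn].
  - simpl INR. unfold Rdiv. rewrite Rinv_0. lra.
  - apply Rmult_le_pos; [apply pos_INR | left; apply Rinv_0_lt_compat, lt_0_INR; lia].
Qed.

Lemma Qcore_ge_Qopt hist Qprev h Vnext x a : concentrated hist ->
  (1 <= h <= nH)%nat -> (x < nS)%nat -> (a < nA)%nat ->
  Qopt h x a <= Qprev h x a ->
  (forall y, (y < nS)%nat -> Vopt (nH - h) y <= Vnext y) ->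
  Qopt h x a <= Qcore nS nA nH nK Rw delta hist Qprev h Vnext x a.
Proof.
  intros Hconc Hh Hx Ha HQ HV. unfold Qcore.
  destruct (Nat.ltb_spec 0 (Nxa nS hist x a)) as [HN|_]; [|apply Qopt_le_H; auto].
  apply Rmin_glb; auto. apply Rmin_glb; [apply Qopt_le_H; auto|].
  assert (sumR nS (fun y => Phat nS hist x a y * Vopt (nH - h) y) <=
          sumR nS (fun y => Phat nS hist x a y * Vnext y)).
  { rewrite !sumR_lsum. apply lsum_le. intros y Hy. apply in_seq in Hy.
    apply Rmult_le_compat_l; [apply Phat_nonneg | apply HV; lia]. }
  specialize (Hconc x a (nH - h)%nat Hx Ha ltac:(lia) HN). unfold Qopt. lra.
Qed.

Lemma Vback_ge_Vopt hist Qprev : concentrated hist ->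
  (forall h x a, (1 <= h <= nH)%nat -> (x < nS)%nat -> (a < nA)%nat ->
     Qopt h x a <= Qprev h x a) ->
  forall m y, (m <= nH)%nat -> (y < nS)%nat ->
  Vopt m y <= Vback nS nA nH nK Rw delta hist Qprev m y.
Proof.
  intros Hconc HQ. induction m as [|m IH]; intros y Hm Hy; simpl; [lra|].
  apply maxR_mono; auto. intros a Ha.
  replace (Rw y a + _) with (Qopt (nH - m) y a)
    by (unfold Qopt, PVopt; now replace (nH - (nH - m))%nat with m by lia).
  apply Qcore_ge_Qopt; auto; [lia | apply HQ; auto; lia |].
  intros y' Hy'. replace (nH - (nH - m))%nat with m by lia. apply IH; auto; lia.
Qed.

Lemma Qk_ge_Qopt eps : (forall k, concentrated (concat (firstn k eps))) ->
  forall k h x a, (1 <= h <= nH)%nat -> (x < nS)%nat -> (a < nA)%nat ->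
  Qopt h x a <= Qk nS nA nH nK Rw delta eps k h x a.
Proof.
  intros Hconc. induction k as [|k IH]; intros h x a Hh Hx Ha; simpl; [apply Qopt_le_H; auto|].
  apply Qcore_ge_Qopt; auto. intros y Hy. apply Vback_ge_Vopt; auto; lia.
Qed.

Lemma optimism_of_concentrated eps : (forall k, concentrated (concat (firstn k eps))) ->
  optimism nS nA nH nK P Rw delta eps.
Proof.
  intros Hconc k h x Hk Hh Hx pi Hpi. destruct k as [|k]; [lia|].
  apply Rle_ge. eapply Rle_trans; [apply Vpi_le_Vopt; auto|].
  apply Vback_ge_Vopt; auto; try lia. apply Qk_ge_Qopt; auto.
Qed.

Definition centred_value (x a m y : nat) : R := PVopt x a m - Vopt m y.

Definition large_deviation (x a m n : nat) (D : list trans) : Prop :=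
  bonus_at n < INR nH /\
  INR n * bonus_at n < first_visits_sum x a (centred_value x a m) D n.

Lemma empirical_value_eq hist x a m :
  (forall t, In t hist -> (snd t < nS)%nat) -> (0 < Nxa nS hist x a)%nat ->
  sumR nS (fun y => Phat nS hist x a y * Vopt m y) =
  PVopt x a m - first_visits_sum x a (centred_value x a m) hist (Nxa nS hist x a)
                / INR (Nxa nS hist x a).
Proof.
  intros Hhist HN. set (N := Nxa nS hist x a) in *.
  assert (HNR : 0 < INR N) by (apply lt_0_INR, HN).
  assert (Hsum : first_visits_sum x a (centred_value x a m) hist N
                 = PVopt x a m * INR N - sumR nS (fun y => INR (cnt3 hist x a y) * Vopt m y)).
  { rewrite <- (sum_counts_first_visits_sum nS) by (auto; unfold N; rewrite Nxa_nvisits; auto).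
    unfold N. rewrite INR_Nxa, !sumR_lsum, <- lsum_scal, <- lsum_minus.
    apply lsum_ext. intros; unfold centred_value; ring. }
  assert (Hemp : sumR nS (fun y => Phat nS hist x a y * Vopt m y)
                 = / INR N * sumR nS (fun y => INR (cnt3 hist x a y) * Vopt m y)).
  { rewrite !sumR_lsum, <- lsum_scal. apply lsum_ext.
    intros; unfold Phat; fold N; unfold Rdiv; ring. }
  rewrite Hsum, Hemp. field. lra.
Qed.

Lemma concentrated_of_no_large_deviation D hist rest :
  (forall t, In t D -> (snd t < nS)%nat) -> (length D <= nK * nH)%nat ->
  (forall x a m n, (x < nS)%nat -> (a < nA)%nat -> (m < nH)%nat -> (1 <= n <= nK * nH)%nat ->
     ~ large_deviation x a m n D) ->
  D = hist ++ rest -> concentrated hist.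
Proof.
  intros HD Hlen Hdev -> x a m Hx Ha Hm HN.
  assert (Hhist : forall t, In t hist -> (snd t < nS)%nat) by (intros; apply HD, in_or_app; auto).
  set (N := Nxa nS hist x a) in *.
  assert (HNv : N = nvisits x a hist) by (apply Nxa_nvisits; auto).
  assert (HNR : 0 < INR N) by (apply lt_0_INR, HN).
  change (bonus nS nA nH nK delta hist x a) with (bonus_at N).
  destruct (Rlt_or_le (bonus_at N) (INR nH)) as [Hb|Hb].
  - assert (HNle : (N <= nK * nH)%nat).
    { rewrite HNv. eapply Nat.le_trans; [apply nvisits_le_length|].
      rewrite length_app in Hlen. unfold trans in *. lia. }
    assert (Hfvs : first_visits_sum x a (centred_value x a m) (hist ++ rest) N
                   <= INR N * bonus_at N).
    { apply Rnot_lt_le. intros Hlt.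
      apply (Hdev x a m N); [auto | auto | auto | lia | split; auto]. }
    rewrite first_visits_sum_app, <- HNv, Nat.sub_diag, first_visits_sum_0, Rplus_0_r in Hfvs.
    assert (first_visits_sum x a (centred_value x a m) hist N / INR N <= bonus_at N).
    { apply (Rmult_le_reg_l (INR N)); auto.
      replace (INR N * (_ / INR N)) with (first_visits_sum x a (centred_value x a m) hist N)
        by (field; lra). lra. }
    rewrite (empirical_value_eq hist x a m) by auto. fold N. lra.
  - assert (0 <= sumR nS (fun y => Phat nS hist x a y * Vopt m y)).
    { rewrite sumR_lsum. apply lsum_nonneg. intros y Hy. apply in_seq in Hy.
      apply Rmult_le_pos; [apply Phat_nonneg | apply Vopt_bounds; lia]. }
    destruct (PVopt_bounds x a m Hx Ha). assert (INR m <= INR nH) by (apply le_INR; lia). lra.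
Qed.

(** * Runs of the algorithm *)

Lemma run_ep_cons k h x eps y ys : run_ep P pick k h x eps (y :: ys) =
  ((x, pick k h x eps, y) :: fst (run_ep P pick k (S h) y eps ys),
   P x (pick k h x eps) y * snd (run_ep P pick k (S h) y eps ys)).
Proof. simpl. destruct (run_ep P pick k (S h) y eps ys); reflexivity. Qed.

Lemma run_cons k eps ys om :
  let ep := run_ep P pick k 1 (start k eps) eps ys in
  run P start pick k eps (ys :: om) =
  (fst (run P start pick (S k) (eps ++ [fst ep]) om),
   snd ep * snd (run P start pick (S k) (eps ++ [fst ep]) om)).
Proof.
  simpl. destruct (run_ep P pick k 1 (start k eps) eps ys) as [tr p].
  simpl. destruct (run P start pick (S k) (eps ++ [tr]) om); reflexivity.
Qed.

Lemma run_ep_next_states k h x eps ys : map snd (fst (run_ep P pick k h x eps ys)) = ys.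
Proof.
  revert h x; induction ys as [|y ys IH]; intros h x; [reflexivity|].
  rewrite run_ep_cons. simpl. rewrite IH. reflexivity.
Qed.

Lemma run_ep_weight_nonneg k L h x eps ys : (1 <= k)%nat -> In ys (all_seqs L nS) ->
  (1 <= h)%nat -> (h + L = nH + 1)%nat -> (x < nS)%nat ->
  0 <= snd (run_ep P pick k h x eps ys).
Proof.
  intros Hk. revert h x ys; induction L as [|L IH]; intros h x ys Hys Hh HL Hx; simpl in Hys.
  - destruct Hys as [<-|[]]. simpl. lra.
  - apply in_flat_map in Hys. destruct Hys as [y [Hy H]].
    apply in_map_iff in H. destruct H as [ys' [<- H]]. apply in_seq in Hy.
    rewrite run_ep_cons. apply Rmult_le_pos; [apply HP0; auto; [apply Hpick|]; auto; lia|].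
    apply IH; auto; lia.
Qed.

Lemma run_weight_nonneg K k eps om : (1 <= k)%nat -> In om (all_outcomes K nH nS) ->
  0 <= snd (run P start pick k eps om).
Proof.
  revert k eps om; induction K as [|K IH]; intros k eps om Hk Hom; simpl in Hom.
  - destruct Hom as [<-|[]]. simpl. lra.
  - apply in_flat_map in Hom. destruct Hom as [ys [Hys H]].
    apply in_map_iff in H. destruct H as [om' [<- H]].
    rewrite run_cons. apply Rmult_le_pos; [|apply IH; auto].
    apply (run_ep_weight_nonneg k nH); auto; lia.
Qed.

Lemma run_episodes K k eps om : In om (all_outcomes K nH nS) ->
  exists X, fst (run P start pick k eps om) = eps ++ X /\ length X = K /\
    forall ep, In ep X -> length ep = nH /\ forall t, In t ep -> (snd t < nS)%nat.
Proof.
  revert k eps om; induction K as [|K IH]; intros k eps om Hom; simpl in Hom.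
  - destruct Hom as [<-|[]]. exists []. rewrite app_nil_r.
    split; [reflexivity | split; [reflexivity | intros _ []]].
  - apply in_flat_map in Hom. destruct Hom as [ys [Hys H]].
    apply in_map_iff in H. destruct H as [om' [<- H]].
    set (ep := fst (run_ep P pick k 1 (start k eps) eps ys)).
    destruct (IH (S k) (eps ++ [ep]) om' H) as [X [E [HXlen HX]]].
    exists (ep :: X). rewrite run_cons. simpl fst. fold ep. rewrite E, <- app_assoc.
    split; [reflexivity | split; [simpl; auto |]].
    apply in_all_seqs in Hys as [Hlen Hy].
    assert (Hsnd := run_ep_next_states k 1 (start k eps) eps ys).
    intros ep' [<-|Hep']; auto. split.
    + rewrite <- Hlen, <- Hsnd, length_map. reflexivity.
    + intros t Ht. apply Hy. rewrite <- Hsnd. apply in_map, Ht.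
Qed.

Lemma run_ep_mass k L h x eps : (1 <= k)%nat -> (1 <= h)%nat -> (h + L = nH + 1)%nat ->
  (x < nS)%nat -> lsum (all_seqs L nS) (fun ys => snd (run_ep P pick k h x eps ys)) = 1.
Proof.
  intros Hk. revert h x; induction L as [|L IH]; intros h x Hh HL Hx; simpl all_seqs.
  - rewrite lsum_cons, lsum_nil. simpl. lra.
  - assert (Ha : (pick k h x eps < nA)%nat) by (apply Hpick; auto; lia).
    rewrite lsum_flat_map, <- (HP1 x (pick k h x eps)) by auto. apply lsum_ext.
    intros y Hy. apply in_seq in Hy.
    rewrite lsum_map, (lsum_ext _ _ (fun ys => P x (pick k h x eps) y *
                                     snd (run_ep P pick k (S h) y eps ys)))
      by (intros; rewrite run_ep_cons; reflexivity).
    rewrite lsum_scal, IH by (auto; lia). lra.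
Qed.

Lemma run_mass K k eps : (1 <= k)%nat ->
  lsum (all_outcomes K nH nS) (fun om => snd (run P start pick k eps om)) = 1.
Proof.
  revert k eps; induction K as [|K IH]; intros k eps Hk; simpl all_outcomes.
  - rewrite lsum_cons, lsum_nil. simpl. lra.
  - rewrite lsum_flat_map, <- (run_ep_mass k nH 1 (start k eps) eps) by (auto; lia).
    apply lsum_ext. intros ys _.
    rewrite lsum_map, (lsum_ext _ _ (fun om => snd (run_ep P pick k 1 (start k eps) eps ys) *
       snd (run P start pick (S k) (eps ++ [fst (run_ep P pick k 1 (start k eps) eps ys)]) om)))
      by (intros; rewrite run_cons; reflexivity).
    rewrite lsum_scal, IH by lia. lra.
Qed.

Definition outcome_weight (om : list (list nat)) : R := snd (run P start pick 1 [] om).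
Definition outcome_episodes (om : list (list nat)) : list episode :=
  fst (run P start pick 1 [] om).

Section Supermartingale.
Variables (x0 a0 : nat) (g : nat -> R).
Hypothesis Hg : sumR nS (fun y => P x0 a0 y * exp (g y)) <= 1.

Lemma run_ep_exp_first_visits_le k L h x eps n : (1 <= k)%nat -> (1 <= h)%nat ->
  (h + L = nH + 1)%nat -> (x < nS)%nat ->
  lsum (all_seqs L nS) (fun ys => snd (run_ep P pick k h x eps ys) *
     exp (first_visits_sum x0 a0 g (fst (run_ep P pick k h x eps ys)) n)) <= 1.
Proof.
  intros Hk. revert h x n; induction L as [|L IH]; intros h x n Hh HL Hx; simpl all_seqs.
  - rewrite lsum_cons, lsum_nil. simpl. rewrite exp_0. lra.
  - assert (Ha : (pick k h x eps < nA)%nat) by (apply Hpick; auto; lia).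
    rewrite lsum_flat_map.
    (* A step contributes a factor [exp (c y)] averaged under [P]: [c = g] at a counted visit
       of [(x0,a0)], where [Hg] bounds the average by 1, and [c = 0] otherwise. *)
    assert (Hstep : forall (c : nat -> R) n',
      (forall y tr, first_visits_sum x0 a0 g ((x, pick k h x eps, y) :: tr) n
                    = c y + first_visits_sum x0 a0 g tr n') ->
      lsum (seq 0 nS) (fun y => lsum (map (cons y) (all_seqs L nS)) (fun ys =>
        snd (run_ep P pick k h x eps ys) *
        exp (first_visits_sum x0 a0 g (fst (run_ep P pick k h x eps ys)) n)))
      <= sumR nS (fun y => P x (pick k h x eps) y * exp (c y))).
    { intros c n' Hc. rewrite sumR_lsum. apply lsum_le. intros y Hy. apply in_seq in Hy.
      rewrite lsum_map, (lsum_ext _ _ (fun ys => P x (pick k h x eps) y * exp (c y) *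
        (snd (run_ep P pick k (S h) y eps ys) *
         exp (first_visits_sum x0 a0 g (fst (run_ep P pick k (S h) y eps ys)) n')))).
      2:{ intros ys _. rewrite run_ep_cons. cbn [fst snd]. rewrite Hc, exp_plus. ring. }
      rewrite lsum_scal, <- Rmult_1_r. apply Rmult_le_compat_l; [|apply IH; auto; lia].
      apply Rmult_le_pos; [apply HP0; auto; lia | left; apply exp_pos]. }
    assert (Hno_gain : sumR nS (fun y => P x (pick k h x eps) y * exp 0) = 1)
      by (rewrite exp_0; apply expect_const; auto).
    destruct (Nat.eqb x x0 && Nat.eqb (pick k h x eps) a0)%bool eqn:Hvisit;
      [destruct n as [|n]|].
    + rewrite <- Hno_gain. apply (Hstep (fun _ => 0) 0%nat). intros y tr.
      rewrite first_visits_sum_cons, Hvisit, first_visits_sum_0. lra.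
    + apply andb_prop in Hvisit as [Hx0 Ha0]. apply Nat.eqb_eq in Hx0, Ha0. subst x.
      eapply Rle_trans; [apply (Hstep g n) | rewrite Ha0; exact Hg].
      intros y tr. rewrite first_visits_sum_cons, Ha0, !Nat.eqb_refl. reflexivity.
    + rewrite <- Hno_gain. apply (Hstep (fun _ => 0) n). intros y tr.
      rewrite first_visits_sum_cons, Hvisit. lra.
Qed.

Lemma run_exp_first_visits_le K k eps n : (1 <= k)%nat ->
  lsum (all_outcomes K nH nS) (fun om => snd (run P start pick k eps om) *
     exp (first_visits_sum x0 a0 g (concat (fst (run P start pick k eps om))) n))
  <= exp (first_visits_sum x0 a0 g (concat eps) n).
Proof.
  revert k eps; induction K as [|K IH]; intros k eps Hk; simpl all_outcomes.
  - rewrite lsum_cons, lsum_nil. simpl. lra.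
  - rewrite lsum_flat_map.
    set (past := exp (first_visits_sum x0 a0 g (concat eps) n)).
    set (left := (n - nvisits x0 a0 (concat eps))%nat).
    apply Rle_trans with (lsum (all_seqs nH nS) (fun ys => past *
       (snd (run_ep P pick k 1 (start k eps) eps ys) *
        exp (first_visits_sum x0 a0 g (fst (run_ep P pick k 1 (start k eps) eps ys)) left)))).
    + apply lsum_le. intros ys Hys. rewrite lsum_map.
      set (ep := run_ep P pick k 1 (start k eps) eps ys).
      rewrite (lsum_ext _ _ (fun om => snd ep * (snd (run P start pick (S k) (eps ++ [fst ep]) om) *
         exp (first_visits_sum x0 a0 g (concat (fst (run P start pick (S k) (eps ++ [fst ep]) om))) n))))
        by (intros; unfold ep; rewrite run_cons; cbn [fst snd]; ring).
      rewrite lsum_scal.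
      assert (0 <= snd ep) by (apply (run_ep_weight_nonneg k nH); auto; lia).
      eapply Rle_trans; [apply Rmult_le_compat_l; [assumption | apply IH; lia]|].
      rewrite concat_app, first_visits_sum_app, exp_plus. simpl concat. rewrite app_nil_r.
      apply Req_le. unfold past, left. ring.
    + rewrite lsum_scal. apply Rle_trans with (past * 1); [|lra].
      apply Rmult_le_compat_l; [left; apply exp_pos|].
      apply run_ep_exp_first_visits_le; auto; lia.
Qed.

Lemma chernoff_first_visits n th :
  lsum (all_outcomes nK nH nS) (fun om => outcome_weight om *
     ind (th <= first_visits_sum x0 a0 g (concat (outcome_episodes om)) n)) <= exp (- th).
Proof.
  assert (Hexp := run_exp_first_visits_le nK 1 [] n (Nat.le_refl 1)).
  simpl first_visits_sum in Hexp. rewrite exp_0 in Hexp.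
  apply Rle_trans with (lsum (all_outcomes nK nH nS) (fun om => exp (- th) *
     (outcome_weight om * exp (first_visits_sum x0 a0 g (concat (outcome_episodes om)) n)))).
  - apply lsum_le. intros om Hom.
    assert (0 <= outcome_weight om) by (apply (run_weight_nonneg nK); auto).
    set (Z := first_visits_sum x0 a0 g (concat (outcome_episodes om)) n).
    assert (Hmarkov : ind (th <= Z) <= exp (- th) * exp Z).
    { rewrite <- exp_plus. destruct (classic (th <= Z)) as [Hth|Hth].
      - rewrite ind_true by auto. rewrite <- exp_0. apply exp_le_exp_compat. lra.
      - rewrite ind_false by auto. left; apply exp_pos. }
    replace (exp (- th) * (outcome_weight om * exp Z))
      with (outcome_weight om * (exp (- th) * exp Z)) by ring.
    apply Rmult_le_compat_l; assumption.
  - rewrite lsum_scal. apply Rle_trans with (exp (- th) * 1); [|lra].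
    apply Rmult_le_compat_l; [left; apply exp_pos | exact Hexp].
Qed.
End Supermartingale.

(** * Concentration and union bound *)

Lemma Lp_ge_1 : (1 <= nK)%nat -> 1 <= Lp nS nA nH nK delta.
Proof.
  intros HK. unfold Lp, Ttot.
  assert (1 <= INR nS) by (apply (le_INR 1); lia).
  assert (1 <= INR nA) by (apply (le_INR 1); lia).
  assert (1 <= INR (nK * nH)) by (apply (le_INR 1); nia).
  assert (1 < / delta) by (rewrite <- Rinv_1; apply Rinv_lt_contravar; lra).
  assert (1 <= INR nS * INR nA * INR (nK * nH)) by (assert (1 <= INR nS * INR nA) by nra; nra).
  assert (3 < 5 * INR nS * INR nA * INR (nK * nH) / delta) by (unfold Rdiv; nra).
  rewrite <- (ln_exp 1). left. apply ln_increasing; [apply exp_pos|]. pose proof exp_le_3. lra.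
Qed.

Lemma centred_value_mgf x a m lam : (x < nS)%nat -> (a < nA)%nat -> (m <= nH)%nat ->
  0 <= lam -> lam * INR nH <= 1/2 ->
  sumR nS (fun y => P x a y * exp (lam * centred_value x a m y - 2 * lam ^ 2 * INR nH ^ 2)) <= 1.
Proof.
  intros Hx Ha Hm Hlam HlamH.
  assert (HmH : INR m <= INR nH) by (apply le_INR, Hm).
  apply hoeffding_mgf; [intros; apply HP0; auto | apply HP1; auto | | | exact Hlam | exact HlamH].
  - unfold centred_value.
    rewrite sumR_lsum, (lsum_ext _ _ (fun y => P x a y * PVopt x a m - P x a y * Vopt m y))
      by (intros; ring).
    rewrite lsum_minus, <- !sumR_lsum, expect_const by auto. unfold PVopt. ring.
  - intros y Hy. unfold centred_value.
    destruct (PVopt_bounds x a m Hx Ha), (Vopt_bounds m y Hy). lra.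
Qed.

Definition chernoff_rate (n : nat) : R := bonus_at n / (4 * INR nH ^ 2).

(* [chernoff_rate n] maximises the exponent [lam n b - 2 lam^2 H^2 n] over [lam], which is
   then [n b^2 / (8 H^2)]. *)
Lemma chernoff_rate_exponent n : (0 < n)%nat ->
  chernoff_rate n * (INR n * bonus_at n) - 2 * chernoff_rate n ^ 2 * INR nH ^ 2 * INR n
  = 49 * Lp nS nA nH nK delta ^ 2 / 8.
Proof.
  intros Hn. unfold chernoff_rate, bonus_at.
  assert (0 < INR nH) by (apply lt_0_INR, HH).
  assert (HnR : 0 < INR n) by (apply lt_0_INR, Hn).
  assert (Hs : 0 < sqrt (INR n)) by (apply sqrt_lt_R0, HnR).
  assert (Hss : sqrt (INR n) * sqrt (INR n) = INR n) by (apply sqrt_sqrt; lra).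
  set (s := sqrt (INR n)) in *. rewrite <- Hss. field. split; lra.
Qed.

Lemma chernoff_rate_bounds n : (1 <= n <= nK * nH)%nat -> bonus_at n < INR nH ->
  0 <= chernoff_rate n /\ chernoff_rate n * INR nH <= 1 / 2.
Proof.
  intros Hn Hb. unfold chernoff_rate.
  assert (Hc : 0 < INR nH) by (apply lt_0_INR, HH).
  assert (0 <= bonus_at n).
  { assert (1 <= Lp nS nA nH nK delta) by (apply Lp_ge_1; nia).
    unfold bonus_at.
    apply Rmult_le_pos; [nra | left; apply Rinv_0_lt_compat, sqrt_lt_R0, lt_0_INR; lia]. }
  split; [unfold Rdiv; apply Rmult_le_pos; [lra | left; apply Rinv_0_lt_compat; nra]|].
  apply (Rmult_le_reg_r (4 * INR nH)); [lra|].
  replace (bonus_at n / (4 * INR nH ^ 2) * INR nH * (4 * INR nH)) with (bonus_at n)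
    by (field; lra).
  lra.
Qed.

Lemma large_deviation_prob x a m n : (x < nS)%nat -> (a < nA)%nat -> (m < nH)%nat ->
  (1 <= n <= nK * nH)%nat ->
  lsum (all_outcomes nK nH nS) (fun om =>
    outcome_weight om * ind (large_deviation x a m n (concat (outcome_episodes om))))
  <= exp (- (2 * Lp nS nA nH nK delta)).
Proof.
  intros Hx Ha Hm Hn.
  destruct (Rlt_or_le (bonus_at n) (INR nH)) as [Hb|Hb].
  2:{ rewrite (lsum_ext _ _ (fun _ => 0)), lsum_const; [rewrite Rmult_0_l; left; apply exp_pos|].
      intros om _. rewrite ind_false; [ring | intros [Hlt _]; lra]. }
  set (lam := chernoff_rate n).
  destruct (chernoff_rate_bounds n Hn Hb) as [Hlam HlamH]. fold lam in Hlam, HlamH.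
  set (th := lam * (INR n * bonus_at n) - 2 * lam ^ 2 * INR nH ^ 2 * INR n).
  set (g := fun y => lam * centred_value x a m y - 2 * lam ^ 2 * INR nH ^ 2).
  apply Rle_trans with (lsum (all_outcomes nK nH nS) (fun om => outcome_weight om *
    ind (th <= first_visits_sum x a g (concat (outcome_episodes om)) n))).
  - apply lsum_le. intros om Hom.
    apply Rmult_le_compat_l; [apply (run_weight_nonneg nK); auto|].
    apply ind_le. intros [_ Hdev].
    eapply Rle_trans; [|apply first_visits_sum_affine_ge; nra].
    assert (lam * (INR n * bonus_at n) <= lam * first_visits_sum x a (centred_value x a m)
              (concat (outcome_episodes om)) n) by (apply Rmult_le_compat_l; lra).
    unfold th. lra.
  - eapply Rle_trans; [apply chernoff_first_visits|].
    + apply centred_value_mgf; auto. lia.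
    + apply exp_le_exp_compat. unfold th, lam. rewrite chernoff_rate_exponent by lia.
      assert (1 <= Lp nS nA nH nK delta) by (apply Lp_ge_1; nia). nra.
Qed.

Definition deviation_indices : list (nat * nat * nat * nat) :=
  list_prod (list_prod (list_prod (seq 0 nS) (seq 0 nA)) (seq 0 nH)) (seq 1 (nK * nH)).

Definition deviation_count (D : list trans) : R :=
  lsum deviation_indices (fun '(x, a, m, n) => ind (large_deviation x a m n D)).

Lemma in_deviation_indices x a m n :
  In (x, a, m, n) deviation_indices <->
  (x < nS)%nat /\ (a < nA)%nat /\ (m < nH)%nat /\ (1 <= n <= nK * nH)%nat.
Proof. unfold deviation_indices. rewrite !in_prod_iff, !in_seq. lia. Qed.

Lemma optimism_of_no_large_deviation om : In om (all_outcomes nK nH nS) ->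
  (forall x a m n, In (x, a, m, n) deviation_indices ->
     ~ large_deviation x a m n (concat (outcome_episodes om))) ->
  optimism nS nA nH nK P Rw delta (outcome_episodes om).
Proof.
  intros Hom Hdev. unfold outcome_episodes in *.
  destruct (run_episodes nK 1 [] om Hom) as [X [Hrun [HXlen HX]]].
  rewrite Hrun in Hdev |- *. simpl app in *.
  apply optimism_of_concentrated. intros k.
  apply (concentrated_of_no_large_deviation (concat X) _ (concat (skipn k X))).
  - intros t Ht. apply in_concat in Ht as [ep [Hep Ht]]. apply (HX ep Hep), Ht.
  - rewrite (length_concat_uniform _ nH); [|intros; apply HX; auto].
    unfold episode, trans in *. lia.
  - intros x a m n Hx Ha Hm Hn. apply Hdev, in_deviation_indices. auto.
  - rewrite <- concat_app, firstn_skipn. reflexivity.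
Qed.

Lemma ind_optimism_ge om : In om (all_outcomes nK nH nS) ->
  1 - deviation_count (concat (outcome_episodes om))
  <= ind (optimism nS nA nH nK P Rw delta (outcome_episodes om)).
Proof.
  intros Hom. unfold deviation_count.
  set (D := concat (outcome_episodes om)).
  assert (Hterms : forall i, In i deviation_indices ->
    0 <= (let '(x, a, m, n) := i in ind (large_deviation x a m n D)))
    by (intros [[[x a] m] n] _; apply ind_bounds).
  destruct (classic (exists x a m n, In (x, a, m, n) deviation_indices /\
                                    large_deviation x a m n D))
    as [[x [a [m [n [Hi Hdev]]]]]|Hnone].
  - assert (1 <= lsum deviation_indices (fun '(x, a, m, n) => ind (large_deviation x a m n D))).
    { rewrite <- (ind_true _ Hdev). apply (lsum_ge_term _ _ (x, a, m, n) Hterms Hi). }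
    pose proof (ind_bounds (optimism nS nA nH nK P Rw delta (outcome_episodes om))). lra.
  - rewrite ind_true.
    + pose proof (lsum_nonneg _ _ Hterms). lra.
    + apply optimism_of_no_large_deviation; auto.
      intros x a m n Hi Hdev. apply Hnone. exists x, a, m, n. auto.
Qed.

Lemma failure_bound :
  exp (- (2 * Lp nS nA nH nK delta)) * INR (length deviation_indices) <= delta.
Proof.
  unfold deviation_indices. rewrite !length_prod, !length_seq.
  destruct (Nat.eq_dec nK 0) as [->|HK].
  { rewrite Nat.mul_0_l, Nat.mul_0_r, Rmult_0_r. lra. }
  unfold Lp, Ttot. rewrite !mult_INR.
  set (s := INR nS). set (a := INR nA). set (h := INR nH). set (k := INR nK).
  assert (1 <= s) by (apply (le_INR 1); lia).
  assert (1 <= a) by (apply (le_INR 1); lia).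
  assert (1 <= h) by (apply (le_INR 1); lia).
  assert (1 <= k) by (apply (le_INR 1); lia).
  assert (1 <= s * a) by nra. assert (1 <= k * h) by nra.
  assert (Hu : 0 < 5 * s * a * (k * h) / delta) by (apply Rdiv_lt_0_compat; nra).
  replace (- (2 * ln (5 * s * a * (k * h) / delta))) with
          (- ln (5 * s * a * (k * h) / delta) + - ln (5 * s * a * (k * h) / delta)) by ring.
  rewrite exp_plus, exp_Ropp, exp_ln by exact Hu.
  replace (/ (5 * s * a * (k * h) / delta) * / (5 * s * a * (k * h) / delta) * (s * a * h * (k * h)))
    with (delta * delta / (25 * s * a * k)) by (field; repeat split; lra).
  apply Rle_trans with (delta * delta / 25).
  - unfold Rdiv. apply Rmult_le_compat_l; [nra|].
    apply Rinv_le_contravar; [lra|]. assert (1 <= s * a * k) by nra. lra.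
  - assert (delta * delta <= delta) by nra. lra.
Qed.

Lemma prob_optimism_eq :
  prob_optimism nS nA nH nK P Rw delta start pick =
  lsum (all_outcomes nK nH nS) (fun om => outcome_weight om *
     ind (optimism nS nA nH nK P Rw delta (outcome_episodes om))).
Proof.
  unfold prob_optimism, outcome_weight, outcome_episodes.
  induction (all_outcomes nK nH nS) as [|om oms IH]; [reflexivity|].
  simpl fold_right. rewrite lsum_cons, <- IH. destruct (run P start pick 1 [] om); reflexivity.
Qed.

Lemma prob_optimism_ge : prob_optimism nS nA nH nK P Rw delta start pick >= 1 - delta.
Proof.
  rewrite prob_optimism_eq. apply Rle_ge.
  set (outcomes := all_outcomes nK nH nS).
  apply Rle_trans with (lsum outcomes (fun om => outcome_weight om
                          - outcome_weight om * deviation_count (concat (outcome_episodes om)))).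
  2:{ apply lsum_le. intros om Hom. rewrite <- (Rmult_1_r (outcome_weight om)) at 1.
      rewrite <- Rmult_minus_distr_l. apply Rmult_le_compat_l.
      - apply (run_weight_nonneg nK); auto.
      - apply ind_optimism_ge; auto. }
  rewrite lsum_minus. unfold outcomes at 1, outcome_weight at 1. rewrite run_mass by lia.
  unfold deviation_count. rewrite (lsum_ext _ _ (fun om => lsum deviation_indices (fun i =>
    outcome_weight om * let '(x, a, m, n) := i in
                        ind (large_deviation x a m n (concat (outcome_episodes om))))))
    by (intros; rewrite lsum_scal; reflexivity).
  rewrite lsum_comm. pose proof failure_bound.
  assert (lsum deviation_indices (fun i => lsum outcomes (fun om => outcome_weight om *
            let '(x, a, m, n) := i in ind (large_deviation x a m n (concat (outcome_episodes om)))))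
          <= exp (- (2 * Lp nS nA nH nK delta)) * INR (length deviation_indices)).
  { rewrite <- lsum_const. apply lsum_le. intros [[[x a] m] n] Hi.
    apply in_deviation_indices in Hi as (Hx & Ha & Hm & Hn). apply large_deviation_prob; auto. }
  lra.
Qed.

Lemma prob_optimism_nonneg : 0 <= prob_optimism nS nA nH nK P Rw delta start pick.
Proof.
  rewrite prob_optimism_eq. apply lsum_nonneg. intros om Hom.
  apply Rmult_le_pos; [apply (run_weight_nonneg nK); auto | apply ind_bounds].
Qed.
End UCBVI_CH.

Theorem mainTheorem3 (nS nA nH nK : nat) (P : nat -> nat -> nat -> R)
    (Rw : nat -> nat -> R) (delta : R)
    (start : nat -> list episode -> nat)
    (pick : nat -> nat -> nat -> list episode -> nat) :
  (0 < nS)%nat -> (0 < nA)%nat -> (0 < nH)%nat ->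
  (forall x a y, (x < nS)%nat -> (a < nA)%nat -> (y < nS)%nat -> 0 <= P x a y) ->
  (forall x a, (x < nS)%nat -> (a < nA)%nat -> sumR nS (fun y => P x a y) = 1) ->
  (forall x a, (x < nS)%nat -> (a < nA)%nat -> 0 <= Rw x a <= 1) ->
  (forall k eps, (start k eps < nS)%nat) ->
  greedy nS nA nH nK Rw delta pick ->
  0 < delta ->
  prob_optimism nS nA nH nK P Rw delta start pick >= 1 - delta.
Proof.
  intros HS HA HH HP0 HP1 HR Hstart Hgreedy Hdelta.
  (* Optimism holds for any policy playing valid actions. *)
  assert (Hpick : forall k h x eps, (1 <= k)%nat -> (1 <= h <= nH)%nat -> (x < nS)%nat ->
    (pick k h x eps < nA)%nat) by (intros; apply Hgreedy; auto).
  destruct (Rlt_or_le delta 1) as [Hdelta1|Hdelta1].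
  - apply prob_optimism_ge; auto.
  - assert (0 <= prob_optimism nS nA nH nK P Rw delta start pick)
      by (apply prob_optimism_nonneg; auto).
    lra.
Qed.
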